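(* Let $P$ be a fixed tree poset with $|P|$ elements. For every $\delta>0$ and positive integers $\ell,q$ there exists $\gamma=\gamma(\delta,\ell,q)>0$ such that the following holds for all $i,s\in[q]$ with $i\neq s$. Let $\mathcal{M}$ be an $\ell$-gapped family of $q$-marked chains with markers from $\widetilde{\mathcal{B}}_n$ and let $F\in\mathcal{L}^i(\mathcal{M})$. Suppose $F$ is $(i,s,\gamma)$-bad with respect to $\mathcal{M}$ and $n$ is sufficiently large. If $i<s$, then $F$ is $(i,\delta)$-lower bad with respect to $\mathcal{M}$; if $i>s$, then $F$ is $(i,\delta)$-upper bad with respect to $\mathcal{M}$.
   Context: $\widetilde{\mathcal{B}}_n=\{F\subseteq[n]: |\,|F|-n/2\,|<2\sqrt{n\ln n}\}$. Full chains, $q$-chains $(F_1\supsetneq\cdots\supsetneq F_q)$ with $i$-th member $F_i$, and $q$-marked chains $(\chi,Q)$ ($\chi$ a full chain $\emptyset\subsetneq\cdots\subsetneq[n]$ containing all members of the $q$-chain $Q$) are as usual. For a family $\mathcal{M}$ of $q$-marked chains, $\mathcal{L}^i(\mathcal{M})$ is the set of sets that are the $i$-th member of some $Q$ with $(\chi,Q)\in\mathcal{M}$, and $\mathcal{M}(F,i)$ is the set of $(\chi,Q)\in\mathcal{M}$ with $F$ the $i$-th member of $Q$. A family $\mathcal{F}$ is $\ell$-gapped if $|G\setminus F|\geq\ell$ whenever $F,G\in\mathcal{F}$, $F\subsetneq G$; $\mathcal{M}$ is $\ell$-gapped if the family of all members of its $q$-chains is. For $F\subseteq[n]$: $U(F)=\{S: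 S\supseteq F\}$, $D(F)=\{S:S\subseteq F\}$; for a family $\mathcal{S}$, $\mathrm{Comp}(\mathcal{S})$ is the set of subsets of $[n]$ comparable (by inclusion) to some member of $\mathcal{S}$; $D^*(F,\mathcal{S})=(D(F)\setminus\{F\})\cap\mathrm{Comp}(\mathcal{S})\cap\widetilde{\mathcal{B}}_n$ and $U^*(F,\mathcal{S})=(U(F)\setminus\{F\})\cap\mathrm{Comp}(\mathcal{S})\cap\widetilde{\mathcal{B}}_n$. For $i<s$, $F\in\mathcal{L}^i(\mathcal{M})$ is $(i,s,\gamma)$-bad w.r.t. $\mathcal{M}$ if there are $\mathcal{W}_1,\mathcal{W}_2\subseteq\widetilde{\mathcal{B}}_n$ with $\mathcal{W}_1\cap U(F)=\emptyset$, $|\mathcal{W}_1|\le|P|$, $|\mathcal{W}_2|\le\gamma n^{\ell(s-i)}$, and for every $(\chi,Q)\in\mathcal{M}(F,i)$ either $Q\cap D^*(F,\mathcal{W}_1)\neq\emptyset$ or the $s$-th member of $Q$ lies in $\mathcal{W}_2$. For $i>s$ it is defined analogously with $\mathcal{W}_1\cap D(F)=\emptyset$, $|\mathcal{W}_2|\le\gamma n^{\ell(i-s)}$, and $U^*(F,\mathcal{W}_1)$ in place of $D^*(F,\mathcal{W}_1)$. With $\chi_0$ a uniformly random full chain: $F$ is $(i,\delta)$-lower bad w.r.t. $\mathcal{M}$ if $\mathcal{M}(F,i)\neq\emptyset$ and some $\mathcal{W}$ satisfies (a) $D\subseteq F$ for all $D\in\mathcal{W}$, (b) $Q\cap\mathcal{W}\neq\emptyset$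 for every $(\chi,Q)\in\mathcal{M}(F,i)$, (c) $\Pr[\chi_0\cap\mathcal{W}\neq\emptyset\mid F\in\chi_0]\le\delta$; $(i,\delta)$-upper bad is the same with $D\supseteq F$ in (a). *)

From Stdlib Require Import Reals.
From mathcomp Require Import all_boot all_order perm.

Set Implicit Arguments.
Unset Strict Implicit.
Unset Printing Implicit Defensive.

Section TreePoset.
Context {d : Order.disp_t} {P : finPOrderType d}.

Definition covers (x y : P) : bool :=
  ((x < y)%O && [forall z : P, ~~ ((x < z)%O && (z < y)%O)]).

Definition hasse_edge (x y : P) : bool := covers x y || covers y x.

Definition hasse_edge_minus (x y : P) (a b : P) : bool :=
  hasse_edge a b && ((a, b) != (x, y)) && ((a, b) != (y, x)).

(* A tree poset: nonempty, its Hasse diagram is connected and acyclic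
   (every edge is a bridge). *)
Definition tree_poset : Prop :=
  0 < #|P| /\
  (forall x y : P, connect hasse_edge x y) /\
  (forall x y : P, covers x y -> ~~ connect (hasse_edge_minus x y) x y).
End TreePoset.

Definition inBt (n : nat) (F : {set 'I_n}) : Prop :=
  Rlt (Rabs (INR #|F| - INR n / 2)) (2 * sqrt (INR n * ln (INR n))).

(* A full chain  {} = C_0 < C_1 < ... < C_n = [n]  is encoded by a
   permutation sigma of [n]:  C_k = sigma({0,...,k-1}).  This is a bijection
   between permutations and full chains, so the uniform full chain is the
   uniform permutation. *)
Definition in_chain (n : nat) (sigma : {perm 'I_n}) (F : {set 'I_n}) : bool :=
  [exists k : 'I_n.+1, F == [set sigma j | j in [pred j : 'I_n | j < k]]].

(* q-marked chain (chi, Q); members indexed 0..q-1 (paper: 1..q),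
   Q 0 is the largest member. *)
Definition mchain (n q : nat) : finType :=
  ({perm 'I_n} * {ffun 'I_q -> {set 'I_n}})%type.

Definition is_marked_chain (n q : nat) (c : mchain n q) : Prop :=
  (forall j k : 'I_q, j < k -> c.2 k \proper c.2 j) /\
  (forall j : 'I_q, in_chain c.1 (c.2 j)).

Definition marked_family_Bt (n q : nat) (M : {set mchain n q}) : Prop :=
  forall c, c \in M -> is_marked_chain c /\ (forall j, inBt (c.2 j)).

Definition Lset (n q : nat) (M : {set mchain n q}) (i : 'I_q) : {set {set 'I_n}} :=
  [set F | [exists c in M, c.2 i == F]].

Definition Msub (n q : nat) (M : {set mchain n q}) (F : {set 'I_n}) (i : 'I_q)
  : {set mchain n q} := [set c in M | c.2 i == F].

Definition gapped_family (n l : nat) (Fam : {set {set 'I_n}}) : Prop :=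
  forall F G, F \in Fam -> G \in Fam -> F \proper G -> l <= #|G :\: F|.

Definition members (n q : nat) (M : {set mchain n q}) : {set {set 'I_n}} :=
  [set F | [exists c in M, [exists j : 'I_q, c.2 j == F]]].

Definition gapped_mfamily (n q l : nat) (M : {set mchain n q}) : Prop :=
  gapped_family l (members M).

Definition Uset (n : nat) (F : {set 'I_n}) : {set {set 'I_n}} := [set S : {set 'I_n} | F \subset S].
Definition Dset (n : nat) (F : {set 'I_n}) : {set {set 'I_n}} := [set S : {set 'I_n} | S \subset F].
Definition Comp (n : nat) (S : {set {set 'I_n}}) : {set {set 'I_n}} :=
  [set X : {set 'I_n} | [exists Y in S, (X \subset Y) || (Y \subset X)]].
Definition in_Dstar (n : nat) (F : {set 'I_n}) (S : {set {set 'I_n}}) (X : {set 'I_n}) : Prop :=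
  X \in Dset F /\ X != F /\ X \in Comp S /\ inBt X.
Definition in_Ustar (n : nat) (F : {set 'I_n}) (S : {set {set 'I_n}}) (X : {set 'I_n}) : Prop :=
  X \in Uset F /\ X != F /\ X \in Comp S /\ inBt X.

Definition bad_iss (p n q l : nat) (M : {set mchain n q}) (F : {set 'I_n})
  (i s : 'I_q) (gamma : R) : Prop :=
  F \in Lset M i /\
  if i < s then
    exists W1 W2 : {set {set 'I_n}},
      (forall X, X \in W1 -> inBt X) /\ (forall X, X \in W2 -> inBt X) /\
      (forall X, X \in W1 -> X \notin Uset F) /\
      #|W1| <= p /\
      Rle (INR #|W2|) (gamma * INR n ^ (l * (s - i))) /\
      (forall c, c \in Msub M F i ->
         (exists j : 'I_q, in_Dstar F W1 (c.2 j)) \/ c.2 s \in W2)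
  else
    exists W1 W2 : {set {set 'I_n}},
      (forall X, X \in W1 -> inBt X) /\ (forall X, X \in W2 -> inBt X) /\
      (forall X, X \in W1 -> X \notin Dset F) /\
      #|W1| <= p /\
      Rle (INR #|W2|) (gamma * INR n ^ (l * (i - s))) /\
      (forall c, c \in Msub M F i ->
         (exists j : 'I_q, in_Ustar F W1 (c.2 j)) \/ c.2 s \in W2).

(* Pr[chi_0 meets W | F in chi_0] for a uniformly random full chain chi_0 *)
Definition cond_prob_meet (n : nat) (W : {set {set 'I_n}}) (F : {set 'I_n}) : R :=
  Rdiv (INR #|[set sigma : {perm 'I_n} | in_chain sigma F &&
                                   [exists D in W, in_chain sigma D]]|)
       (INR #|[set sigma : {perm 'I_n} | in_chain sigma F]|).

Definition lower_bad (n q : nat) (M : {set mchain n q}) (F : {set 'I_n})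
  (i : 'I_q) (delta : R) : Prop :=
  Msub M F i != set0 /\
  exists W : {set {set 'I_n}},
    (forall D, D \in W -> D \subset F) /\
    (forall c, c \in Msub M F i -> exists j : 'I_q, c.2 j \in W) /\
    Rle (cond_prob_meet W F) delta.

Definition upper_bad (n q : nat) (M : {set mchain n q}) (F : {set 'I_n})
  (i : 'I_q) (delta : R) : Prop :=
  Msub M F i != set0 /\
  exists W : {set {set 'I_n}},
    (forall D, D \in W -> F \subset D) /\
    (forall c, c \in Msub M F i -> exists j : 'I_q, c.2 j \in W) /\
    Rle (cond_prob_meet W F) delta.

(* Case i < s. Let W1, W2 witness the badness and m = l(s-i). The members X of
   the chains of M(F,i) with X in D*(F,W1), or with X in W2 and |F| - |X| >= m,
   form a family W below F that meets every chain of M(F,i). Conditioned on F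
   being in the random full chain, the chain below F is a uniform full chain of
   F, so it passes through a fixed D inside F with probability at most
   1/C(|F|,|D|). Let a be the least size of a set of B_n, so that |F| - a is at
   most 4 sqrt(n ln n) = o(n). If the chain passes through X inside some Y of
   W1, its level a lies in F /\ Y, a proper part of F; if it passes through X
   with Y inside X strictly inside F, its level |F|-1 contains Y. Each of these
   events has probability at most (|F|-a)/|F|, so W1 contributes at most
   2|P|(|F|-a)/|F| <= delta/2. A set of W2 is met with probability at most
   1/C(|F|,m) <= m! (4/n)^m, so W2 contributes at most gamma 4^m m! <= delta/2.
   Complementing all sets reverses full chains and turns the case i > s into
   this one. Only |P| matters, not the tree structure of P. *)

From Stdlib Require Import Reals Lra.
From mathcomp Require Import all_boot all_order perm zify.

Set Implicit Arguments.
Unset Strict Implicit.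
Unset Printing Implicit Defensive.

Lemma card_ord_ltn n k : k <= n -> #|[pred j : 'I_n | j < k]| = k.
Proof.
move=> le_kn; have widen_inj : injective (widen_ord le_kn).
  by move=> i j /(congr1 val) /= /val_inj.
rewrite -[RHS]card_ord -(card_imset _ widen_inj).
apply: eq_card => j; rewrite inE; apply/idP/imsetP => [lt_jk|[i _ ->]].
  by exists (Ordinal lt_jk) => //; apply: val_inj.
by rewrite /= ltn_ord.
Qed.

Lemma card_bigcup_leq (I T : finType) (P : pred I) (A : I -> {set T}) :
  #|\bigcup_(i | P i) A i| <= \sum_(i | P i) #|A i|.
Proof.
elim/big_rec2: _ => [|i m U _ le_U]; first by rewrite cards0.
by rewrite (leq_trans (leq_card_setU _ _).1) ?leq_add2l.
Qed.

Lemma imset_permM (T : finType) (s t : {perm T}) (A : {set T}) :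
  (s * t)%g @: A = t @: (s @: A).
Proof. by rewrite -imset_comp; apply: eq_imset => x; rewrite permM. Qed.

Lemma mem_imset_tperm (T : finType) (x y u : T) (A : {set T}) :
  (u \in tperm x y @: A) = (tperm x y u \in A).
Proof. by rewrite -{1}(tpermK x y u) mem_imset //; exact: perm_inj. Qed.

Lemma perm_subsets_transitive (T : finType) (F D D' : {set T}) :
  D \subset F -> D' \subset F -> #|D| = #|D'| ->
  exists2 t : {perm T}, t @: F = F & t @: D = D'.
Proof.
move: {2}#|D :\: D'| (erefl #|D :\: D'|) => k.
elim: k D => [|k IH] D def_k sDF sD'F eq_DD'.
  exists 1%g; first by rewrite (eq_imset _ (@perm1 T)) imset_id.
  rewrite (eq_imset _ (@perm1 T)) imset_id; apply/eqP.
  by rewrite eqEcard eq_DD' leqnn andbT -setD_eq0 -cards_eq0 def_k.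
have /card_gt0P[x] : 0 < #|D :\: D'| by rewrite def_k.
rewrite inE => /andP[xD' xD].
have /card_gt0P[y] : 0 < #|D' :\: D|.
  by have := cardsID D' D; have := cardsID D D'; rewrite setIC def_k; lia.
rewrite inE => /andP[yD yD'].
have xF : x \in F := subsetP sDF x xD.
have yF : y \in F := subsetP sD'F y yD'.
have tF : tperm x y @: F = F.
  by apply/setP=> u; rewrite mem_imset_tperm; case: tpermP => [->|->|//]; rewrite xF yF.
have tD : tperm x y @: D :\: D' = (D :\: D') :\ x.
  apply/setP=> u; rewrite !inE mem_imset_tperm.
  case: tpermP => [->|->|/eqP ux _]; last by rewrite ux.
    by rewrite eqxx (negbTE yD) andbF.
  by rewrite yD' /= andbF.
have [t tF' tD'] : exists2 t : {perm T}, t @: F = F & t @: (tperm x y @: D) = D'.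
  apply: IH.
  - by move: def_k; rewrite tD (cardsD1 x (D :\: D')) !inE xD' xD => -[].
  - by rewrite -tF imsetS.
  - by [].
  - by rewrite card_imset //; exact: perm_inj.
by exists (tperm x y * t)%g; rewrite imset_permM ?tF.
Qed.

Lemma leq_bin_half f m k : m <= k -> 2 * k <= f -> 'C(f, m) <= 'C(f, k).
Proof.
elim: k => [|k IH]; first by rewrite leqn0 => /eqP->.
rewrite leq_eqVlt => /orP[/eqP-> //|lt_mk] le_kf.
apply: leq_trans (IH lt_mk _) _; first lia.
by rewrite -(leq_pmul2l (ltn0Sn k)) mul_bin_left leq_mul2r; apply/orP; right; lia.
Qed.

Lemma expn_sub_leq_ffact f m : (f - m) ^ m <= f ^_ m.
Proof.
suff le_j j : j <= m -> (f - m) ^ j <= f ^_ j by exact: le_j.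
elim: j => [|j IH] lt_jm //; rewrite ffactnSr expnSr leq_mul //; [exact: IH (ltnW lt_jm)|lia].
Qed.

Section FullChains.

Variable n : nat.
Implicit Types (s t : {perm 'I_n}) (F D X Y : {set 'I_n}) (W : {set {set 'I_n}}).

Lemma card_set_leq X : #|X| <= n.
Proof. by rewrite -[X in _ <= X]card_ord max_card. Qed.

Lemma card_setC_ord X : #|~: X| = n - #|X|.
Proof. by rewrite cardsCs setCK card_ord. Qed.

Definition chain_level s k : {set 'I_n} := [set s j | j in [pred j : 'I_n | j < k]].

Lemma mem_chain_level s k u : (u \in chain_level s k) = ((s^-1)%g u < k).
Proof.
apply/imsetP/idP => [[j lt_jk ->]|lt_uk]; first by rewrite permK.
by exists ((s^-1)%g u); rewrite ?permKV.
Qed.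

Lemma card_chain_level s k : k <= n -> #|chain_level s k| = k.
Proof. by move=> le_kn; rewrite card_imset ?card_ord_ltn //; exact: perm_inj. Qed.

Lemma chain_levelS s a b : a <= b -> chain_level s a \subset chain_level s b.
Proof.
by move=> le_ab; apply/subsetP=> u; rewrite !mem_chain_level => /leq_trans; apply.
Qed.

Lemma chain_levelM s t k : chain_level (s * t) k = t @: chain_level s k.
Proof. by rewrite /chain_level -imset_comp; apply: eq_imset => j; rewrite permM. Qed.

Lemma in_chainE s X : in_chain s X = (chain_level s #|X| == X).
Proof.
apply/existsP/idP => [[k /eqP def_X]|/eqP def_X].
  by rewrite def_X card_chain_level -/(chain_level s k) -?def_X // -ltnS.
have lt_Xn : #|X| < n.+1 by rewrite ltnS card_set_leq.
by exists (Ordinal lt_Xn); rewrite -/(chain_level s _) def_X.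
Qed.

Lemma in_chain_level s k : k <= n -> in_chain s (chain_level s k).
Proof. by move=> le_kn; rewrite in_chainE card_chain_level. Qed.

Lemma in_chain_sub s X k :
  in_chain s X -> k <= #|X| -> chain_level s k \subset X.
Proof. by rewrite in_chainE => /eqP def_X le_kX; rewrite -def_X chain_levelS. Qed.

Lemma in_chain_sup s X k :
  in_chain s X -> #|X| <= k -> X \subset chain_level s k.
Proof. by rewrite in_chainE => /eqP def_X le_Xk; rewrite -def_X chain_levelS. Qed.

Definition chains_through F := [set s | in_chain s F].
Definition chains_through2 F D := [set s | in_chain s F && in_chain s D].
Definition chains_meeting F W := [set s | in_chain s F && [exists D in W, in_chain s D]].

Lemma card_chains_through2_perm t F D :
  t @: F = F -> #|chains_through2 F D| <= #|chains_through2 F (t @: D)|.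
Proof.
move=> tF; rewrite -(card_imset _ (mulIg t)); apply: subset_leq_card.
apply/subsetP=> _ /imsetP[s + ->]; rewrite !inE !in_chainE card_imset; last exact: perm_inj.
by rewrite !chain_levelM => /andP[/eqP-> /eqP->]; rewrite tF !eqxx.
Qed.

Lemma card_chains_through2_leq F D D' : D \subset F -> D' \subset F -> #|D| = #|D'| ->
  #|chains_through2 F D| <= #|chains_through2 F D'|.
Proof.
move=> sDF sD'F eq_DD'; have [t tF <-] := perm_subsets_transitive sDF sD'F eq_DD'.
exact: card_chains_through2_perm.
Qed.

Lemma card_chains_through2 F D :
  D \subset F -> #|chains_through2 F D| * 'C(#|F|, #|D|) <= #|chains_through F|.
Proof.
move=> sDF; set a := #|D|; have le_aF : a <= #|F| by exact: subset_leq_card.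
pose Da := [set D' : {set 'I_n} | D' \subset F & #|D'| == a].
have -> : #|chains_through F| = \sum_(D' in Da) #|chains_through2 F D'|.
  rewrite -sum1_card (partition_big (chain_level^~ a) (fun D' => D' \in Da)) => [|s].
    apply: eq_bigr => D'; rewrite inE => /andP[_ /eqP card_D']; rewrite -sum1_card.
    by apply: eq_bigl => s; rewrite !inE (in_chainE s D') card_D'.
  rewrite !inE card_chain_level ?eqxx ?andbT => [F_s|].
    exact: in_chain_sub F_s le_aF.
  exact: leq_trans le_aF (card_set_leq F).
rewrite mulnC -cards_draws -sum_nat_const; apply: leq_sum => D'.
by rewrite inE => /andP[sD'F /eqP card_D']; exact: card_chains_through2_leq.
Qed.

Lemma card_chains_meeting_bin F W B :
  (forall D, D \in W -> D \subset F /\ B <= 'C(#|F|, #|D|)) ->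
  #|chains_meeting F W| * B <= #|W| * #|chains_through F|.
Proof.
move=> hW; have sub : chains_meeting F W \subset \bigcup_(D in W) chains_through2 F D.
  apply/subsetP=> s; rewrite inE => /andP[F_s /existsP[D /andP[DW D_s]]].
  by apply/bigcupP; exists D => //; rewrite inE F_s D_s.
apply: leq_trans (leq_mul (leq_trans (subset_leq_card sub) (card_bigcup_leq _ _)) (leqnn B)) _.
rewrite big_distrl /= -sum_nat_const; apply: leq_sum => D /hW[sDF le_B].
exact: leq_trans (leq_mul (leqnn _) le_B) (card_chains_through2 sDF).
Qed.

Definition low_sets F Y (a : nat) := [set D : {set 'I_n} | (D \subset F :&: Y) && (#|D| == a)].
Definition high_sets F Y := [set D : {set 'I_n} | [&& D \subset F, Y \subset D & #|D| == #|F|.-1]].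

Lemma chains_meeting_low s F X Y a :
  in_chain s F -> in_chain s X -> a <= #|X| -> X \subset F :&: Y ->
  s \in chains_meeting F (low_sets F Y a).
Proof.
move=> F_s X_s le_aX sXFY; rewrite inE F_s; apply/existsP; exists (chain_level s a).
have le_an : a <= n := leq_trans le_aX (card_set_leq X).
rewrite inE card_chain_level // eqxx andbT in_chain_level // andbT.
exact: subset_trans (in_chain_sub X_s le_aX) sXFY.
Qed.

Lemma chains_meeting_high s F X Y :
  in_chain s F -> in_chain s X -> X \proper F -> Y \subset X ->
  s \in chains_meeting F (high_sets F Y).
Proof.
move=> F_s X_s ltXF sYX; rewrite inE F_s; apply/existsP; exists (chain_level s #|F|.-1).
have le_fn : #|F|.-1 <= n := leq_trans (leq_pred _) (card_set_leq F).
have le_Xf : #|X| <= #|F|.-1 by have := proper_card ltXF; lia.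
rewrite inE card_chain_level // eqxx andbT in_chain_level // andbT.
by rewrite (in_chain_sub F_s (leq_pred _)) (subset_trans sYX (in_chain_sup X_s le_Xf)).
Qed.

Lemma card_chains_meeting_low F Y a : a <= #|F| -> ~~ (F \subset Y) ->
  #|chains_meeting F (low_sets F Y a)| * #|F| <= (#|F| - a) * #|chains_through F|.
Proof.
move=> le_aF nsFY; set f := #|F|.
have C_gt0 : 0 < 'C(f, a) by rewrite bin_gt0.
have card_low : #|low_sets F Y a| <= 'C(f.-1, a).
  rewrite cards_draws leq_bin2l //; have := cardsID Y F.
  have : 0 < #|F :\: Y| by rewrite card_gt0 setD_eq0.
  rewrite /f; lia.
have bin_bound : #|chains_meeting F (low_sets F Y a)| * 'C(f, a)
                   <= #|low_sets F Y a| * #|chains_through F|.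
  apply: card_chains_meeting_bin => D; rewrite inE => /andP[sD /eqP->].
  by split; first exact: subset_trans sD (subsetIl _ _).
rewrite -(leq_pmul2r C_gt0) mulnAC.
apply: leq_trans (_ : _ <= #|low_sets F Y a| * #|chains_through F| * f) _.
  by rewrite leq_mul2r bin_bound orbT.
apply: leq_trans (_ : _ <= 'C(f.-1, a) * #|chains_through F| * f) _.
  by rewrite !leq_mul2r card_low !orbT.
by rewrite mulnAC [_ * f]mulnC mul_bin_down mulnAC.
Qed.

Lemma card_chains_meeting_high F Y a : 0 < #|F| -> a <= #|Y| ->
  #|chains_meeting F (high_sets F Y)| * #|F| <= (#|F| - a) * #|chains_through F|.
Proof.
move=> F_gt0 le_aY.
have bin_bound : #|chains_meeting F (high_sets F Y)| * #|F|
                   <= #|high_sets F Y| * #|chains_through F|.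
  apply: card_chains_meeting_bin => D; rewrite inE => /and3P[sDF _ /eqP->].
  by rewrite -subn1 bin_sub // bin1.
apply: leq_trans bin_bound (leq_mul _ (leqnn _)).
have [->|[D0]] := set_0Vmem (high_sets F Y); first by rewrite cards0.
rewrite inE => /and3P[sD0F sYD0 _]; have sYF := subset_trans sYD0 sD0F.
have sub : high_sets F Y \subset [set F :\ y | y in F :\: Y].
  apply/subsetP=> D; rewrite inE => /and3P[sDF sYD /eqP card_D].
  have /card_gt0P[y] : 0 < #|F :\: D|.
    by have := cardsID D F; rewrite (setIidPr sDF); lia.
  rewrite inE => /andP[yD yF]; apply/imsetP; exists y.
    by rewrite inE yF andbT; apply: contra yD; exact: (subsetP sYD).
  apply/eqP; rewrite eqEcard; apply/andP; split.
    by apply/subsetP=> u uD; rewrite !inE (subsetP sDF u uD) andbT; apply: contraNneq yD => <-.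
  by have := cardsD1 y F; rewrite yF card_D; lia.
apply: leq_trans (subset_leq_card sub) (leq_trans (leq_imset_card _ _) _).
by have := cardsID Y F; rewrite (setIidPr sYF); lia.
Qed.

Lemma card_chains_meeting_split F W W1 W2 a m :
  0 < #|F| -> a <= #|F| -> 2 * (#|F| - a) <= #|F| ->
  (forall Y, Y \in W1 -> ~~ (F \subset Y) /\ a <= #|Y|) ->
  (forall X, X \in W -> [/\ X \subset F, a <= #|X| &
     X != F /\ X \in Comp W1 \/ X \in W2 /\ m <= #|F| - #|X|]) ->
  #|chains_meeting F W| * (#|F| * 'C(#|F|, m))
    <= (#|W1| * (2 * (#|F| - a)) * 'C(#|F|, m) + #|W2| * #|F|) * #|chains_through F|.
Proof.
move=> F_gt0 le_aF le_2aF hW1 hW; set f := #|F|; set S := #|chains_through F|.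
pose E1 := \bigcup_(Y in W1)
  (chains_meeting F (low_sets F Y a) :|: chains_meeting F (high_sets F Y)).
pose Wfar := [set X in W2 | (X \subset F) && (m <= f - #|X|) && (a <= #|X|)].
have cover : chains_meeting F W \subset E1 :|: chains_meeting F Wfar.
  apply/subsetP=> s; rewrite inE => /andP[F_s /existsP[X /andP[XW X_s]]].
  have [sXF le_aX [[neXF]|[XW2 far_X]]] := hW X XW; last first.
    rewrite !inE F_s; apply/orP; right.
    by apply/existsP; exists X; rewrite !inE XW2 sXF far_X le_aX.
  rewrite inE => /existsP[Y /andP[YW1 /orP[sXY|sYX]]]; rewrite inE; apply/orP; left;
    apply/bigcupP; exists Y => //; rewrite inE; apply/orP.
    by left; apply: chains_meeting_low X_s le_aX _; rewrite // subsetI sXF.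
  by right; apply: chains_meeting_high X_s _ sYX; rewrite // properEneq neXF.
have bound1 : #|E1| * f <= #|W1| * (2 * (f - a)) * S.
  apply: leq_trans (leq_mul (card_bigcup_leq _ _) (leqnn f)) _.
  rewrite big_distrl -mulnA -sum_nat_const; apply: leq_sum => Y /hW1[nsFY le_aY].
  apply: leq_trans (leq_mul (leq_card_setU _ _).1 (leqnn f)) _.
  by rewrite mul2n -addnn !mulnDl leq_add ?card_chains_meeting_low ?card_chains_meeting_high.
have bound2 : #|chains_meeting F Wfar| * 'C(f, m) <= #|W2| * S.
  apply: leq_trans (card_chains_meeting_bin _) _ => [X|].
    rewrite !inE => /andP[_ /andP[/andP[sXF far_X] le_aX]]; split => //.
    by rewrite -(bin_sub (subset_leq_card sXF)) leq_bin_half //; lia.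
  by rewrite leq_mul2r subset_leq_card ?orbT //; apply/subsetP=> X; rewrite inE => /andP[].
apply: leq_trans (leq_mul (leq_trans (subset_leq_card cover) (leq_card_setU _ _).1) (leqnn _)) _.
rewrite !mulnDl; apply: leq_add.
  apply: leq_trans (_ : _ <= #|W1| * (2 * (f - a)) * S * 'C(f, m)) _.
    by rewrite mulnA leq_mul2r bound1 orbT.
  by rewrite mulnAC.
by rewrite [f * _]mulnC mulnA [X in _ <= X]mulnAC leq_mul2r bound2 orbT.
Qed.

Lemma rev_chain_inj s : injective (fun j => s (rev_ord j)).
Proof. by move=> i j /perm_inj /rev_ord_inj. Qed.

Definition rev_chain s : {perm 'I_n} := perm (@rev_chain_inj s).

Lemma rev_chainK : involutive rev_chain.
Proof. by move=> s; apply/permP=> j; rewrite !permE rev_ordK. Qed.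

Lemma chain_level_rev s k : k <= n -> chain_level (rev_chain s) k = ~: chain_level s (n - k).
Proof.
move=> le_kn; apply/setP=> u; rewrite inE !mem_chain_level.
have -> : ((rev_chain s)^-1)%g u = rev_ord ((s^-1)%g u).
  by apply: (canLR (permK _)); rewrite permE rev_ordK permKV.
by case: ((s^-1)%g u) => v lt_vn /=; apply/idP/idP; lia.
Qed.

Lemma in_chain_rev s X : in_chain (rev_chain s) X = in_chain s (~: X).
Proof.
by rewrite !in_chainE chain_level_rev ?card_set_leq // card_setC_ord -(inj_eq (@setC_inj _)) setCK.
Qed.

Lemma chains_meeting_setC F W :
  chains_meeting (~: F) [set ~: X | X in W] = rev_chain @^-1: chains_meeting F W.
Proof.
apply/setP=> s; rewrite !inE in_chain_rev; congr (_ && _).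
apply/existsP/existsP => [[_ /andP[/imsetP[D DW ->] D_s]]|[D /andP[DW D_s]]].
  by exists D; rewrite DW in_chain_rev.
by exists (~: D); rewrite imset_f //= -in_chain_rev.
Qed.

Lemma cond_prob_meet_setC F W :
  cond_prob_meet W F = cond_prob_meet [set ~: X | X in W] (~: F).
Proof.
have rev_inj : injective rev_chain := can_inj rev_chainK.
rewrite /cond_prob_meet -/(chains_meeting F W) -/(chains_meeting (~: F) _) chains_meeting_setC.
rewrite card_preimset //; congr (Rdiv _ (INR _)); rewrite -(card_preimset _ rev_inj).
by apply: eq_card => s; rewrite !inE in_chain_rev.
Qed.

End FullChains.

Section RealBounds.

Local Open Scope R_scope.

Lemma INR_addn m k : INR (m + k) = INR m + INR k.
Proof. exact: plus_INR. Qed.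

Lemma INR_muln m k : INR (m * k) = INR m * INR k.
Proof. exact: mult_INR. Qed.

Lemma INR_subn m k : (k <= m)%N -> INR (m - k) = INR m - INR k.
Proof. by move/leP; exact: minus_INR. Qed.

Lemma INR_expn m k : INR (m ^ k) = INR m ^ k.
Proof. by elim: k => [|k IH] //; rewrite expnS INR_muln IH. Qed.

Lemma INR_leq m k : (m <= k)%N -> INR m <= INR k.
Proof. by move/leP; exact: le_INR. Qed.

Lemma ln_le_2sqrt x : 0 < x -> ln x <= 2 * sqrt x.
Proof.
move=> x_gt0; have sx_gt0 : 0 < sqrt x by apply: sqrt_lt_R0.
have -> : ln x = 2 * ln (sqrt x) by rewrite -{1}(sqrt_sqrt x) ?ln_mult; lra.
have := exp_ineq1_le (ln (sqrt x)); rewrite exp_ln //; lra.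
Qed.

Lemma sqrt_nlnn_small eps : 0 < eps -> exists N : nat, forall n : nat, (N <= n)%N ->
  2 * sqrt (INR n * ln (INR n)) <= eps * INR n.
Proof.
move=> eps_gt0; set c := 8 / (eps * eps).
have c_gt0 : 0 < c by apply: Rdiv_lt_0_compat; nra.
have [N le_cN] := INR_archimed 1 (c * c) Rlt_0_1.
exists N => n le_Nn; set x := INR n.
have le_cx : c * c < x by have := INR_leq le_Nn; rewrite /x; lra.
have le_csx : c <= sqrt x by rewrite -(sqrt_square c); [apply: sqrt_le_1_alt|]; lra.
have le_ln : ln x <= eps * eps / 4 * x.
  apply: Rle_trans (ln_le_2sqrt _) _; first nra.
  rewrite -{2}(sqrt_sqrt x); last nra.
  have : eps * eps * c = 8 by rewrite /c; field; nra.
  nra.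
have key : x * ln x <= (eps * x / 2) * (eps * x / 2) by nra.
by have := sqrt_le_1_alt _ _ key; rewrite sqrt_square; nra.
Qed.

Lemma nat_least_above (t : R) (f : nat) : t < INR f ->
  exists a : nat, [/\ (a <= f)%N, t < INR a & forall k : nat, t < INR k -> (a <= k)%N].
Proof.
move=> lt_tf; pose above k := if Rlt_dec t (INR k) then true else false.
have aboveP k : above k <-> t < INR k by rewrite /above; case: Rlt_dec.
have [|a /aboveP lt_ta min_a] := ex_minnP (ex_intro above f _); first exact/aboveP.
by exists a; split => // [|k /aboveP]; [apply: min_a; apply/aboveP | exact: min_a].
Qed.

Lemma pow_sub_le_bin (f m : nat) : (m <= f)%N ->
  (INR f - INR m) ^ m <= INR 'C(f, m) * INR m`!.
Proof.
move=> le_mf; rewrite -INR_muln bin_ffact -INR_subn // -INR_expn.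
exact/INR_leq/expn_sub_leq_ffact.
Qed.

Definition gamma_of (delta : R) (K : nat) : R := delta / (2 * INR (K`! * 4 ^ K)).

Definition eps_of (delta : R) (p : nat) : R := Rmin (1 / 10) (delta / (20 * (INR p + 1))).

Lemma fact_exp4_gt0 K : 0 < INR (K`! * 4 ^ K).
Proof. by apply: lt_0_INR; apply/ltP; rewrite muln_gt0 fact_gt0 expn_gt0. Qed.

Lemma gamma_of_gt0 delta K : 0 < delta -> 0 < gamma_of delta K.
Proof.
by move=> delta_gt0; have := fact_exp4_gt0 K => ?; apply: Rdiv_lt_0_compat; lra.
Qed.

Lemma gamma_of_le delta K m : 0 < delta -> (m <= K)%N ->
  gamma_of delta K * (4 ^ m * INR m`!) <= delta / 2.
Proof.
move=> delta_gt0 le_mK; have K_gt0 := fact_exp4_gt0 K.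
have : INR (m`! * 4 ^ m) <= INR (K`! * 4 ^ K).
  by apply/INR_leq/leq_mul; [exact: leq_fact | exact: leq_pexp2l].
rewrite INR_muln INR_expn /gamma_of (_ : INR 4 = 4); last by simpl; ring.
move=> le_fact; apply: (Rle_trans _ (delta / (2 * INR (K`! * 4 ^ K)) * INR (K`! * 4 ^ K))).
  by apply: Rmult_le_compat_l; [apply: Rlt_le; apply: Rdiv_lt_0_compat|]; lra.
by apply: Req_le; field; lra.
Qed.

Lemma gamma_pow_le_bin delta (K m f n : nat) : 0 < delta -> (m <= K)%N -> (m <= f)%N ->
  INR n / 4 <= INR f - INR m -> gamma_of delta K * INR n ^ m <= delta / 2 * INR 'C(f, m).
Proof.
move=> delta_gt0 le_mK le_mf le_n4; have gamma_gt0 := gamma_of_gt0 K delta_gt0.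
have -> : INR n ^ m = 4 ^ m * (INR n / 4) ^ m.
  by rewrite -Rpow_mult_distr; congr (_ ^ _); field.
apply: (Rle_trans _ (gamma_of delta K * 4 ^ m * (INR 'C(f, m) * INR m`!))).
  rewrite Rmult_assoc; apply: Rmult_le_compat_l; first lra.
  apply: Rmult_le_compat_l; first by apply: pow_le; lra.
  by apply: Rle_trans (pow_sub_le_bin le_mf); apply: pow_incr; have := pos_INR n; lra.
rewrite (_ : _ * _ * _ = gamma_of delta K * (4 ^ m * INR m`!) * INR 'C(f, m)); last ring.
by apply: Rmult_le_compat_r; [exact: pos_INR | exact: gamma_of_le].
Qed.

Lemma eps_of_gt0 delta p : 0 < delta -> 0 < eps_of delta p.
Proof.
move=> delta_gt0; have := pos_INR p => p_ge0.
by apply: Rmin_glb_lt; [lra | apply: Rdiv_lt_0_compat; lra].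
Qed.

Lemma eps_of_le delta p : 0 < delta -> 20 * INR p * eps_of delta p <= delta.
Proof.
move=> delta_gt0; have := pos_INR p => p_ge0; have := eps_of_gt0 p delta_gt0.
have : eps_of delta p <= delta / (20 * (INR p + 1)) := Rmin_r _ _.
have : 20 * (INR p + 1) * (delta / (20 * (INR p + 1))) = delta by field; lra.
set e := eps_of _ _; set t := delta / _; nra.
Qed.

Lemma inBt_card n (X : {set 'I_n}) : inBt X ->
  INR n / 2 - 2 * sqrt (INR n * ln (INR n)) < INR #|X| < INR n / 2 + 2 * sqrt (INR n * ln (INR n)).
Proof. by move=> /Rabs_def2; lra. Qed.

Lemma inBt_setC n (X : {set 'I_n}) : inBt X -> inBt (~: X).
Proof.
rewrite /inBt card_setC_ord INR_subn ?card_set_leq //.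
by rewrite -Rabs_Ropp; congr (Rabs _ < _); lra.
Qed.

Lemma Bt_threshold n (F : {set 'I_n}) eps : eps <= 1 / 10 ->
  2 * sqrt (INR n * ln (INR n)) <= eps * INR n -> inBt F ->
  exists a : nat, [/\ (a <= #|F|)%N, forall X : {set 'I_n}, inBt X -> (a <= #|X|)%N,
     2 / 5 * INR n <= INR #|F| & INR #|F| - INR a <= 2 * eps * INR n].
Proof.
move=> le_eps le_r /inBt_card[lo_F hi_F]; have n_ge0 := pos_INR n.
have [a [le_aF lt_a min_a]] := nat_least_above lo_F.
have : eps * INR n <= INR n / 10 by nra.
by exists a; split => // [X /inBt_card[lo_X _]||]; [exact: min_a | lra | lra].
Qed.

Lemma cond_prob_meet_le n (F : {set 'I_n}) (W : {set {set 'I_n}}) c : 0 <= c ->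
  INR #|chains_meeting F W| <= c * INR #|chains_through F| -> cond_prob_meet W F <= c.
Proof.
move=> c_ge0 le_Ec; rewrite /cond_prob_meet -/(chains_meeting F W) -/(chains_through F).
have [S0|S_gt0] := posnP #|chains_through F|.
  suff -> : #|chains_meeting F W| = 0%N by rewrite /Rdiv Rmult_0_l.
  apply/eqP; rewrite -leqn0 -S0 subset_leq_card //.
  by apply/subsetP=> s; rewrite !inE => /andP[].
have S_pos : 0 < INR #|chains_through F| by apply: lt_0_INR; apply/ltP.
apply: (Rmult_le_reg_r _ _ _ S_pos); rewrite /Rdiv Rmult_assoc Rinv_l; lra.
Qed.

Lemma cond_prob_meet_small n (F : {set 'I_n}) (W W1 W2 : {set {set 'I_n}}) p K m delta :
  0 < delta -> (m <= K)%N -> 8 * INR K + 8 <= INR n ->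
  2 * sqrt (INR n * ln (INR n)) <= eps_of delta p * INR n ->
  inBt F -> (#|W1| <= p)%N -> INR #|W2| <= gamma_of delta K * INR n ^ m ->
  (forall Y, Y \in W1 -> ~~ (F \subset Y) /\ inBt Y) ->
  (forall X, X \in W -> [/\ X \subset F, inBt X &
     X != F /\ X \in Comp W1 \/ X \in W2 /\ (m <= #|F| - #|X|)%N]) ->
  cond_prob_meet W F <= delta.
Proof.
move=> delta_gt0 le_mK n_large le_r F_Bt card_W1 card_W2 hW1 hW.
have eps_le : eps_of delta p <= 1 / 10 := Rmin_l _ _.
have eps_p := eps_of_le p delta_gt0.
have K_ge0 := pos_INR K.
have [a [le_aF aX f_lo fa_hi]] := Bt_threshold eps_le le_r F_Bt.
set f := #|F| in le_aF f_lo fa_hi *; set x := INR n in n_large le_r card_W2 f_lo fa_hi.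
have eps_x : eps_of delta p * x <= x / 10 by have := pos_INR n; nra.
have f_gt0 : (0 < f)%N by apply/ltP/INR_lt; rewrite /=; lra.
have le_2aF : (2 * (f - a) <= f)%N.
  by apply/leP/INR_le; rewrite INR_muln INR_subn //=; lra.
have le_mf : (m <= f)%N by apply/leP/INR_le; have := INR_leq le_mK; lra.
have near : INR #|W1| * (2 * (INR f - INR a)) <= delta / 2 * INR f.
  have := pos_INR #|W1|; have := pos_INR p; have := eps_of_gt0 p delta_gt0.
  have := INR_leq card_W1; have := INR_leq le_aF; nra.
have far : INR #|W2| <= delta / 2 * INR 'C(f, m).
  apply: Rle_trans card_W2 (gamma_pow_le_bin delta_gt0 le_mK le_mf _).
  by rewrite -/x; have := INR_leq le_mK; lra.
have := card_chains_meeting_split (W := W) f_gt0 le_aF le_2aF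
  (fun Y YW1 => let: conj nsFY Y_Bt := hW1 Y YW1 in conj nsFY (aX Y Y_Bt))
  (fun X XW => let: And3 sXF X_Bt cases := hW X XW in And3 sXF (aX X X_Bt) cases).
move=> /INR_leq; rewrite !(INR_muln, INR_addn) INR_subn // (_ : INR 2 = 2) // => split_bound.
apply: cond_prob_meet_le; first lra.
have C_gt0 : 0 < INR 'C(f, m) by apply: lt_0_INR; apply/ltP; rewrite bin_gt0.
have fR_gt0 : 0 < INR f by apply: lt_0_INR; apply/ltP.
apply: (Rmult_le_reg_r (INR f * INR 'C(f, m))); first nra.
apply: Rle_trans split_bound _; rewrite -/f.
have : INR #|W1| * (2 * (INR f - INR a) * INR 'C(f, m)) + INR #|W2| * INR f
         <= delta * (INR f * INR 'C(f, m)).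
  have := Rmult_le_compat_r _ _ _ (Rlt_le _ _ C_gt0) near.
  have := Rmult_le_compat_r _ _ _ (Rlt_le _ _ fR_gt0) far; lra.
move/(Rmult_le_compat_r _ _ _ (pos_INR #|chains_through F|)); lra.
Qed.

End RealBounds.

Section MarkedChains.

Variables (n q : nat).
Implicit Types (M : {set mchain n q}) (c : mchain n q) (F X : {set 'I_n}).

Lemma marked_chain_sub c (j k : 'I_q) :
  is_marked_chain c -> j <= k -> c.2 k \subset c.2 j.
Proof.
move=> [dec_c _]; rewrite leq_eqVlt => /orP[/eqP/val_inj-> //|lt_jk].
exact: proper_sub (dec_c j k lt_jk).
Qed.

Lemma mem_members M c (j : 'I_q) : c \in M -> c.2 j \in members M.
Proof.
by move=> cM; rewrite inE; apply/existsP; exists c; rewrite cM; apply/existsP; exists j.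
Qed.

Lemma members_Msub_inBt M F (i : 'I_q) X :
  marked_family_Bt M -> X \in members (Msub M F i) -> inBt X.
Proof.
move=> hM; rewrite inE => /existsP[c /andP[+ /existsP[j /eqP <-]]].
by rewrite inE => /andP[cM _]; exact: (hM c cM).2.
Qed.

Lemma marked_chain_gap l M c (j k : 'I_q) :
  marked_family_Bt M -> gapped_mfamily l M -> c \in M -> j <= k ->
  l * (k - j) <= #|c.2 j| - #|c.2 k|.
Proof.
move=> hM hg cM le_jk; have c_chain := (hM c cM).1.
have step (t u : 'I_q) : t < u -> l + #|c.2 u| <= #|c.2 t|.
  move=> lt_tu; have ltc := c_chain.1 t u lt_tu.
  have := hg _ _ (mem_members u cM) (mem_members t cM) ltc.
  rewrite cardsD (setIidPr (proper_sub ltc)); have := proper_card ltc; lia.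
have le_card (u : 'I_q) : j <= u -> #|c.2 u| <= #|c.2 j|.
  by move=> le_ju; apply/subset_leq_card/marked_chain_sub.
suff gap d (u : 'I_q) : u = j + d :> nat -> l * d <= #|c.2 j| - #|c.2 u|.
  by apply: gap; rewrite subnKC.
elim: d u => [|d IH] u def_u; first by rewrite muln0.
have lt_jdq : j + d < q by have := ltn_ord u; lia.
have := IH (Ordinal lt_jdq) erefl; have := step (Ordinal lt_jdq) u.
have := le_card (Ordinal lt_jdq); rewrite /= def_u; lia.
Qed.

End MarkedChains.

Lemma leq_mul_subn_ord l q (j k : 'I_q) : (l * (k - j) <= l * q)%N.
Proof. by rewrite leq_mul2l (leq_trans (leq_subr _ _) (ltnW (ltn_ord k))) orbT. Qed.

Lemma Comp_setC n (S : {set {set 'I_n}}) (X : {set 'I_n}) :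
  X \in Comp S -> ~: X \in Comp [set ~: Y | Y in S].
Proof.
rewrite !inE => /existsP[Y /andP[YS cmp]].
by apply/existsP; exists (~: Y); rewrite imset_f //= !setCS orbC.
Qed.

Lemma Msub_neq0 n q (M : {set mchain n q}) F i : F \in Lset M i -> Msub M F i != set0.
Proof.
by rewrite inE => /existsP[c cMF]; apply/set0Pn; exists c; rewrite inE.
Qed.

Lemma Lset_inBt n q (M : {set mchain n q}) F i :
  marked_family_Bt M -> F \in Lset M i -> inBt F.
Proof.
move=> hM /Msub_neq0/set0Pn[c]; rewrite inE => /andP[cM /eqP <-].
exact: (hM c cM).2.
Qed.

Section LowerUpperBad.

Local Open Scope R_scope.

Variables (p n q l : nat) (delta : R).
Hypothesis delta_gt0 : 0 < delta.
Hypothesis n_large : 8 * INR (l * q) + 8 <= INR n.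
Hypothesis sqrt_small : 2 * sqrt (INR n * ln (INR n)) <= eps_of delta p * INR n.
Variables (M : {set mchain n q}) (F : {set 'I_n}) (i s : 'I_q).

Lemma lower_bad_of_bad_iss : marked_family_Bt M -> gapped_mfamily l M -> (i < s)%N ->
  bad_iss p l M F i s (gamma_of delta (l * q)) -> lower_bad M F i delta.
Proof.
move=> hM hg lt_is [FL]; rewrite lt_is => -[W1 [W2 [W1_Bt [_ [W1_U [card_W1 [card_W2 cover]]]]]]].
set m := (l * (s - i))%N in card_W2.
pose W := [set X in members (Msub M F i) | (X \subset F) &&
  ((X != F) && (X \in Comp W1) || (X \in W2) && (m <= #|F| - #|X|)%N)].
split; first exact: Msub_neq0.
exists W; split; [|split].
- by move=> X; rewrite inE => /andP[_ /andP[]].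
- move=> c cMF; have := cMF; rewrite inE => /andP[cM /eqP cF].
  case: (cover c cMF) => [[j [jD [neq [cmp _]]]]|sW2].
    by exists j; rewrite inE mem_members //=; rewrite inE in jD; rewrite jD neq cmp.
  have gap := marked_chain_gap hM hg cM (ltnW lt_is).
  exists s; rewrite inE mem_members //= sW2 -cF gap orbT andbT.
  exact: marked_chain_sub (hM c cM).1 (ltnW lt_is).
apply: (cond_prob_meet_small (W1 := W1) (W2 := W2) (p := p) (K := l * q) (m := m)) => //.
- exact: leq_mul_subn_ord.
- exact: Lset_inBt hM FL.
- by move=> Y YW1; split; [have := W1_U Y YW1; rewrite inE | exact: W1_Bt].
move=> X; rewrite inE => /andP[Xmem /andP[sXF alt]]; split => //.
  exact: members_Msub_inBt hM Xmem.
by case/orP: alt => /andP[? ?]; [left|right].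
Qed.

Lemma upper_bad_of_bad_iss : marked_family_Bt M -> gapped_mfamily l M -> (s < i)%N ->
  bad_iss p l M F i s (gamma_of delta (l * q)) -> upper_bad M F i delta.
Proof.
move=> hM hg lt_si [FL]; rewrite ltnNge (ltnW lt_si) /=.
move=> -[W1 [W2 [W1_Bt [_ [W1_D [card_W1 [card_W2 cover]]]]]]].
set m := (l * (i - s))%N in card_W2.
pose W := [set X in members (Msub M F i) | (F \subset X) &&
  ((X != F) && (X \in Comp W1) || (X \in W2) && (m <= #|X| - #|F|)%N)].
split; first exact: Msub_neq0.
exists W; split; [|split].
- by move=> X; rewrite inE => /andP[_ /andP[]].
- move=> c cMF; have := cMF; rewrite inE => /andP[cM /eqP cF].
  case: (cover c cMF) => [[j [jU [neq [cmp _]]]]|sW2].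
    by exists j; rewrite inE mem_members //=; rewrite inE in jU; rewrite jU neq cmp.
  have gap := marked_chain_gap hM hg cM (ltnW lt_si).
  exists s; rewrite inE mem_members //= sW2 -cF gap orbT andbT.
  exact: marked_chain_sub (hM c cM).1 (ltnW lt_si).
rewrite cond_prob_meet_setC.
apply: (cond_prob_meet_small (W1 := [set ~: Y | Y in W1]) (W2 := [set ~: X | X in W2])
          (p := p) (K := l * q) (m := m)) => //.
- exact: leq_mul_subn_ord.
- exact/inBt_setC/(Lset_inBt hM FL).
- exact: leq_trans (leq_imset_card _ _) card_W1.
- exact: Rle_trans (INR_leq (leq_imset_card _ _)) card_W2.
- move=> _ /imsetP[Y YW1 ->]; split; last exact/inBt_setC/W1_Bt.
  by rewrite setCS; have := W1_D Y YW1; rewrite inE.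
move=> _ /imsetP[X + ->]; rewrite inE => /andP[Xmem /andP[sFX alt]].
split; [by rewrite setCS | exact/inBt_setC/(members_Msub_inBt hM Xmem) |].
case/orP: alt => /andP[alt1 alt2]; [left|right]; split.
- by rewrite (inj_eq (@setC_inj _)).
- exact: Comp_setC.
- exact: imset_f.
- by rewrite !card_setC_ord; have := card_set_leq X; lia.
Qed.

End LowerUpperBad.

Theorem lemma4p17 (d : Order.disp_t) (P : finPOrderType d) :
  tree_poset (P := P) ->
  forall (delta : R) (l q : nat), Rlt 0 delta -> 0 < l -> 0 < q ->
  exists gamma : R, Rlt 0 gamma /\
  exists N : nat, forall n : nat, N <= n ->
  forall (i s : 'I_q), i != s ->
  forall (M : {set mchain n q}) (F : {set 'I_n}),
    marked_family_Bt M -> gapped_mfamily l M -> F \in Lset M i ->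
    bad_iss #|P| l M F i s gamma ->
    (i < s -> lower_bad M F i delta) /\ (s < i -> upper_bad M F i delta).
Proof.
move=> _ delta l q delta_gt0 _ _.
exists (gamma_of delta (l * q)); split; first exact: gamma_of_gt0.
have [N sqrt_small] := sqrt_nlnn_small (eps_of_gt0 #|P| delta_gt0).
exists (maxn N (8 * (l * q) + 8)) => n; rewrite geq_max => /andP[le_Nn le_n] i s _ M F hM hg _ bad.
have n_large : Rle (8 * INR (l * q) + 8) (INR n).
  by have := INR_leq le_n; rewrite INR_addn !INR_muln /=; lra.
split => [lt_is|lt_si].
- exact: (lower_bad_of_bad_iss delta_gt0 n_large (sqrt_small n le_Nn) hM hg lt_is bad).
- exact: (upper_bad_of_bad_iss delta_gt0 n_large (sqrt_small n le_Nn) hM hg lt_si bad).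
Qed.
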